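(* Let $x,y\in\mathbb{B}^2\setminus\{0\}$ be such that $0,x,y$ are noncollinear. Let $t_x=\sqrt{\frac{1}{|x|^2}-1}$ and $t_y=\sqrt{\frac{1}{|y|^2}-1}$, so that $0$ is the inversion of $x$ in the circle $S^1(x^*,t_x)$ and the inversion of $y$ in the circle $S^1(y^*,t_y)$. Then $S^1(x^*,t_x)$ is orthogonal to $S^1(y^*,t_y)$ if and only if $\cos\angle x0y=|x||y|$.
   Context: $\mathbb{B}^2$ is the unit disk; $S^1(c,r)$ the circle with centre $c$ and radius $r$; $x^*=x/|x|^2$; $\angle x0y$ is the angle at $0$ between the segments $[0,x]$ and $[0,y]$. *)

From Stdlib Require Import Reals Lra.
Open Scope R_scope.

Definition pt := (R * R)%type.

Definition dot (x y : pt) : R := fst x * fst y + snd x * snd y.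
Definition norm (x : pt) : R := sqrt (dot x x).
Definition dist (x y : pt) : R := norm (fst x - fst y, snd x - snd y).

(* inversion in the unit circle: x^* = x / |x|^2 *)
Definition star (x : pt) : pt := (fst x / (norm x ^ 2), snd x / (norm x ^ 2)).

Definition collinear0 (x y : pt) : Prop := fst x * snd y - snd x * fst y = 0.

Definition angle0 (x y : pt) : R := acos (dot x y / (norm x * norm y)).

Record circle := mkCircle { center : pt; radius : R }.

(* Two circles (positive radii) are orthogonal iff they meet at right angles,
   i.e. |c1 - c2|^2 = r1^2 + r2^2. *)
Definition orthogonal (C D : circle) : Prop :=
  dist (center C) (center D) ^ 2 = radius C ^ 2 + radius D ^ 2.

Definition inversion (C : circle) (z : pt) : pt :=
  let d := dist z (center C) in
  (fst (center C) + radius C ^ 2 * (fst z - fst (center C)) / d ^ 2,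
   snd (center C) + radius C ^ 2 * (snd z - snd (center C)) / d ^ 2).

(* Since x^* = x / |x|^2, one has |x^* - y^*|^2 = 1/|x|^2 + 1/|y|^2 - 2 (x.y) / (|x|^2 |y|^2),
   while t_x^2 + t_y^2 = 1/|x|^2 + 1/|y|^2 - 2.  Hence the two circles are orthogonal exactly
   when x.y = |x|^2 |y|^2, i.e. when cos(angle x0y) = x.y / (|x| |y|) equals |x| |y|. *)
From Pilot Require Import Defs.
From Stdlib Require Import Reals Lra Psatz.
Open Scope R_scope.

Lemma dot_self_ge0 (x : pt) : 0 <= dot x x.
Proof. unfold dot; nra. Qed.

Lemma norm_sqr (x : pt) : norm x ^ 2 = dot x x.
Proof. unfold norm; rewrite pow2_sqrt; [reflexivity | apply dot_self_ge0]. Qed.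

Lemma dist_sqr (x y : pt) : Defs.dist x y ^ 2 = dot x x - 2 * dot x y + dot y y.
Proof.
  unfold Defs.dist; rewrite norm_sqr.
  destruct x as [x1 x2], y as [y1 y2]; unfold dot; simpl; ring.
Qed.

Lemma dot_star (x y : pt) : dot (star x) (star y) = dot x y / (norm x ^ 2 * norm y ^ 2).
Proof.
  unfold star, dot; cbn [fst snd].
  unfold Rdiv; rewrite Rinv_mult; ring.
Qed.

Lemma dist_star_sqr (x y : pt) : norm x <> 0 -> norm y <> 0 ->
  Defs.dist (star x) (star y) ^ 2
  = / norm x ^ 2 + / norm y ^ 2 - 2 * dot x y / (norm x ^ 2 * norm y ^ 2).
Proof.
  intros Hx Hy.
  rewrite dist_sqr, !dot_star, <- !norm_sqr.
  field; split; assumption.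
Qed.

Lemma Cauchy_Schwarz (x y : pt) : - (norm x * norm y) <= dot x y <= norm x * norm y.
Proof.
  assert (Hsqr : dot x y ^ 2 <= (norm x * norm y) ^ 2).
  { rewrite Rpow_mult_distr, !norm_sqr.
    destruct x as [x1 x2], y as [y1 y2]; unfold dot; simpl.
    (* Lagrange's identity *)
    pose proof (pow2_ge_0 (x1 * y2 - x2 * y1)); nra. }
  assert (Hpos : 0 <= norm x * norm y).
  { apply Rmult_le_pos; apply sqrt_pos. }
  split; nra.
Qed.

Lemma cos_angle0 (x y : pt) : norm x <> 0 -> norm y <> 0 ->
  cos (angle0 x y) = dot x y / (norm x * norm y).
Proof.
  intros Hx Hy.
  assert (Hpos : 0 < norm x * norm y).
  { pose proof (sqrt_pos (dot x x)); pose proof (sqrt_pos (dot y y)).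
    unfold norm in *; apply Rmult_lt_0_compat; lra. }
  apply cos_acos.
  pose proof (Cauchy_Schwarz x y) as Hcs.
  replace (dot x y) with (dot x y / (norm x * norm y) * (norm x * norm y)) in Hcs
    by (field; lra).
  split; nra.
Qed.

Lemma Rdiv_eq_iff (a b c : R) : b <> 0 -> a / b = c <-> a = c * b.
Proof.
  intros Hb; split; intros H.
  - rewrite <- H; field; exact Hb.
  - rewrite H; field; exact Hb.
Qed.

Lemma sqrt_inv_sqr_sub1_sqr (r : R) : 0 < r <= 1 -> sqrt (1 / r ^ 2 - 1) ^ 2 = / r ^ 2 - 1.
Proof.
  intros Hr.
  assert (Hinv : 1 <= / r ^ 2).
  { rewrite <- Rinv_1; apply Rinv_le_contravar; nra. }
  rewrite pow2_sqrt; unfold Rdiv; lra.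
Qed.

Lemma orthogonal_star_circles (x y : pt) : 0 < norm x <= 1 -> 0 < norm y <= 1 ->
  orthogonal (mkCircle (star x) (sqrt (1 / norm x ^ 2 - 1)))
             (mkCircle (star y) (sqrt (1 / norm y ^ 2 - 1)))
  <-> dot x y = norm x ^ 2 * norm y ^ 2.
Proof.
  intros Hx Hy.
  assert (Hxy : norm x ^ 2 * norm y ^ 2 <> 0).
  { apply Rmult_integral_contrapositive_currified; apply pow_nonzero; lra. }
  unfold orthogonal; cbn [center radius].
  rewrite dist_star_sqr, !sqrt_inv_sqr_sub1_sqr by lra.
  transitivity (dot x y / (norm x ^ 2 * norm y ^ 2) = 1).
  { unfold Rdiv; split; intros H; lra. }
  rewrite Rdiv_eq_iff by exact Hxy; lra.
Qed.

Theorem proposition4p34 (x y : pt) :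
  0 < norm x < 1 -> 0 < norm y < 1 -> ~ collinear0 x y ->
  let tx := sqrt (1 / norm x ^ 2 - 1) in
  let ty := sqrt (1 / norm y ^ 2 - 1) in
  (orthogonal (mkCircle (star x) tx) (mkCircle (star y) ty)
   <-> cos (angle0 x y) = norm x * norm y).
Proof.
  intros Hx Hy _ tx ty.
  assert (Hxy : norm x * norm y <> 0).
  { apply Rmult_integral_contrapositive_currified; lra. }
  unfold tx, ty; rewrite orthogonal_star_circles by lra.
  rewrite cos_angle0, Rdiv_eq_iff by lra.
  replace (norm x * norm y * (norm x * norm y)) with (norm x ^ 2 * norm y ^ 2) by ring.
  reflexivity.
Qed.
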